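(* Let $\beta>0$, $\beta_a>0$, $\alpha>0$ and $x_a\in[0,1]$, and consider the planar system on $\Gamma=[0,x_a]\times[0,1-x_a]$ \[ \frac{di_a}{dt}=F_a(i_a,i_r)\triangleq \beta(x_a-i_a)(i_a+i_r)-\beta_a(x_a-i_a)i_a-\alpha i_a, \qquad \frac{di_r}{dt}=F_r(i_a,i_r)\triangleq \beta(1-x_a-i_r)(i_a+i_r)-\beta_a(x_a-i_a)i_r-\alpha i_r, \] with initial condition $(i_a(0),i_r(0))\in\Gamma$. Then: (1) The infection-free equilibrium $(0,0)$ is globally asymptotically stable with respect to $\Gamma$ if and only if $\frac{\beta}{\alpha}\le 1+\frac{\beta_a x_a}{\alpha}$. (2) When $\frac{\beta}{\alpha}> 1+\frac{\beta_a x_a}{\alpha}$, there exists a unique interior equilibrium \[ \boldsymbol{i}^*=\Big(x_a\frac{\lambda_+}{\lambda_++\alpha},\;(1-x_a)\frac{\lambda_+}{\lambda_++\alpha}\Big),\qquad \lambda_+\triangleq \beta-\beta_a x_a-\alpha, \] and it is globally asymptotically stable with respect to $\Gamma$.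
   Context: This is the A-SIS model: a population of cyber nodes, a fixed fraction $x_a$ of which are active defenders; $i_a$ (resp. $i_r$) is the fraction of nodes that are infected active defenders (resp. infected non-active nodes), and $i=i_a+i_r$ is the total infected fraction. Let $\mathcal{E}=\{\boldsymbol{i}\in\Gamma: F_a(\boldsymbol{i})=F_r(\boldsymbol{i})=0\}$ be the set of equilibria. An equilibrium $\boldsymbol{i}^*\in\Gamma$ is called globally asymptotically stable with respect to $\Gamma$ if for every initial condition $\boldsymbol{i}_0\in\Gamma\setminus\mathcal{E}$ the solution $\boldsymbol{i}(t)$ converges to $\boldsymbol{i}^*$ as $t\to\infty$. An equilibrium is called interior if it lies in $(0,x_a)\times(0,1-x_a)$. *)

From Stdlib Require Import Reals.
From Coquelicot Require Import Coquelicot.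
Open Scope R_scope.

Definition Fa (beta betaa alpha xa ia ir : R) : R :=
  beta * (xa - ia) * (ia + ir) - betaa * (xa - ia) * ia - alpha * ia.

Definition Fr (beta betaa alpha xa ia ir : R) : R :=
  beta * (1 - xa - ir) * (ia + ir) - betaa * (xa - ia) * ir - alpha * ir.

Definition inGamma (xa ia ir : R) : Prop :=
  0 <= ia <= xa /\ 0 <= ir <= 1 - xa.

Definition interior_pt (xa ia ir : R) : Prop :=
  0 < ia < xa /\ 0 < ir < 1 - xa.

Definition is_equilibrium (beta betaa alpha xa ia ir : R) : Prop :=
  inGamma xa ia ir /\ Fa beta betaa alpha xa ia ir = 0 /\ Fr beta betaa alpha xa ia ir = 0.

Definition is_solution (beta betaa alpha xa : R) (ia ir : R -> R) : Prop :=
  (forall t, 0 < t ->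
     is_derive ia t (Fa beta betaa alpha xa (ia t) (ir t)) /\
     is_derive ir t (Fr beta betaa alpha xa (ia t) (ir t))) /\
  filterlim ia (at_right 0) (locally (ia 0)) /\
  filterlim ir (at_right 0) (locally (ir 0)).

Definition GAS (beta betaa alpha xa ea er : R) : Prop :=
  is_equilibrium beta betaa alpha xa ea er /\
  forall ia ir : R -> R,
    is_solution beta betaa alpha xa ia ir ->
    inGamma xa (ia 0) (ir 0) ->
    ~ is_equilibrium beta betaa alpha xa (ia 0) (ir 0) ->
    is_lim ia p_infty ea /\ is_lim ir p_infty er.

(* With i = ia + ir and d = (ia - xa i) / i, the relative distance of the state from the
   diagonal ia : ir = xa : 1 - xa, the system decouples: d' = - beta d, so d decays
   exponentially, and i solves the forced logistic equation
   i' = i (lam - (lam + alpha) i + betaa d(0) e^{- beta t} i),  lam = beta - betaa xa - alpha.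
   Hence 1 / i solves a linear equation: it grows without bound when lam <= 0 and tends to
   (lam + alpha) / lam when lam > 0, and (ia, ir) = i (xa + d, 1 - xa - d) follows.
   Positivity of i and invariance of Gamma come from integrating factors.  When lam > 0 the
   logistic curve along the diagonal is a solution converging to the endemic state, so 0 is
   not attracting; every nonzero equilibrium lies on the diagonal at level lam / (lam + alpha). *)

From Stdlib Require Import Reals Lra.
From Coquelicot Require Import Coquelicot.
Open Scope R_scope.
Set Bullet Behavior "Strict Subproofs".

Lemma continuous_Rplus_comp (f g : R -> R) (x : R) :
  continuous f x -> continuous g x -> continuous (fun t => f t + g t) x.
Proof. exact (continuous_plus f g x). Qed.

Lemma continuous_Rminus_comp (f g : R -> R) (x : R) :
  continuous f x -> continuous g x -> continuous (fun t => f t - g t) x.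
Proof. exact (continuous_minus f g x). Qed.

Lemma continuous_Ropp_comp (f : R -> R) (x : R) :
  continuous f x -> continuous (fun t => - f t) x.
Proof. exact (continuous_opp f x). Qed.

Lemma continuous_Rmult_comp (f g : R -> R) (x : R) :
  continuous f x -> continuous g x -> continuous (fun t => f t * g t) x.
Proof. exact (continuous_mult f g x). Qed.

Ltac continuity :=
  repeat match goal with
  | |- continuous (fun _ => ?c) _ => apply continuous_const
  | |- continuous (fun t => t) _ => apply continuous_id
  | |- continuous (fun _ => exp _) _ => apply continuous_exp_comp
  | |- continuous (fun _ => / _) _ => apply continuous_Rinv_comp
  | |- continuous (fun _ => _ / _) _ => apply continuous_Rmult_comp
  | |- continuous (fun _ => _ - _) _ => apply continuous_Rminus_comp
  | |- continuous (fun _ => _ + _) _ => apply continuous_Rplus_comp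
  | |- continuous (fun _ => _ * _) _ => apply continuous_Rmult_comp
  | |- continuous (fun _ => - _) _ => apply continuous_Ropp_comp
  | |- continuous (Rmult ?c) _ => apply (continuous_Rmult_comp (fun _ => c) (fun t => t))
  | |- continuous (Rplus ?c) _ => apply (continuous_Rplus_comp (fun _ => c) (fun t => t))
  | |- continuous _ _ => solve [eauto]
  end.

Ltac rewrite_Derive :=
  repeat match goal with
  | H : is_derive ?f ?x ?l |- context [Derive (fun y => ?f y) ?x] =>
      rewrite (is_derive_unique (fun y : R => f y) x l H)
  end.

Ltac derive :=
  auto_derive; [repeat split; try (eexists; eassumption); try assumption | rewrite_Derive].

Lemma is_derive_continuous (f : R -> R) (x l : R) : is_derive f x l -> continuous f x.
Proof. intros hd. apply (ex_derive_continuous (V := R_NormedModule)). now exists l. Qed.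

Lemma le_of_derive_nonneg (f df : R -> R) (a b : R) : a <= b ->
  (forall x, a < x < b -> is_derive f x (df x)) ->
  (forall x, a <= x <= b -> continuous f x) ->
  (forall x, a <= x <= b -> 0 <= df x) -> f a <= f b.
Proof.
  intros hab hd hc hdf.
  destruct (MVT_gen f a b df) as (c & hc_ab & hmvt);
    rewrite ?Rmin_left, ?Rmax_right in * by exact hab.
  - exact hd.
  - intros x hx. apply continuity_pt_filterlim, hc, hx.
  - specialize (hdf c hc_ab). nra.
Qed.

Lemma eq_of_derive_zero (f : R -> R) (a b : R) : a <= b ->
  (forall x, a < x < b -> is_derive f x 0) ->
  (forall x, a <= x <= b -> continuous f x) -> f a = f b.
Proof.
  intros hab hd hc.
  destruct (MVT_gen f a b (fun _ => 0)) as (c & _ & hmvt);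
    rewrite ?Rmin_left, ?Rmax_right in * by exact hab.
  - exact hd.
  - intros x hx. apply continuity_pt_filterlim, hc, hx.
  - lra.
Qed.

Lemma div_add_in_01 (a b : R) : 0 < a -> 0 < b -> 0 < a / (a + b) < 1.
Proof.
  intros ha hb. split; [apply Rdiv_lt_0_compat; lra|].
  apply Rmult_lt_reg_r with (a + b); [lra|]. field_simplify; lra.
Qed.

Lemma exp_opp_le_1 (x : R) : 0 <= x -> exp (- x) <= 1.
Proof.
  intros hx. rewrite <- exp_0. destruct (Rle_lt_or_eq_dec 0 x hx) as [h | <-].
  - left. apply exp_increasing. lra.
  - rewrite Ropp_0. apply Rle_refl.
Qed.

Lemma is_lim_exp_opp_scal (c : R) : 0 < c ->
  is_lim (fun t => exp (- (c * t))) p_infty 0.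
Proof.
  intros hc. apply (is_lim_comp (fun y => exp y) (fun t => - (c * t)) p_infty 0 m_infty).
  - exact is_lim_exp_m.
  - replace m_infty with (Rbar_mult p_infty (- c))
      by (apply is_Rbar_mult_unique, is_Rbar_mult_p_infty_neg; simpl; lra).
    apply (is_lim_ext (fun t => t * - c)); [intros; ring|].
    apply is_lim_scal_r, is_lim_id.
  - exists 0. intros t _. discriminate.
Qed.

(* Extending a function on [0, +oo) by its value at 0 makes right-continuity at 0 two-sided. *)
Definition extend_left (f : R -> R) (t : R) : R := f (Rmax 0 t).

Lemma extend_left_eq (f : R -> R) (t : R) : 0 <= t -> extend_left f t = f t.
Proof. intros ht. unfold extend_left. now rewrite Rmax_right. Qed.

Lemma extend_left_continuous (f : R -> R) (t : R) :
  (forall u, 0 < u -> continuous f u) ->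
  filterlim f (at_right 0) (locally (f 0)) -> continuous (extend_left f) t.
Proof.
  intros hc hr. unfold extend_left.
  destruct (Rtotal_order t 0) as [ht | [-> | ht]].
  - apply continuous_ext_loc with (fun _ => f 0); [|apply continuous_const].
    exists (mkposreal (- t) ltac:(lra)). intros y hy.
    apply Rabs_lt_between' in hy. simpl in hy. rewrite Rmax_left by lra. reflexivity.
  - unfold continuous. rewrite Rmax_left by lra.
    apply filterlim_locally. intros eps.
    destruct (proj1 (filterlim_locally f (f 0)) hr eps) as [d hd].
    exists d. intros y hy. destruct (Rle_dec y 0).
    + rewrite Rmax_left by lra. apply ball_center.
    + rewrite Rmax_right by lra. apply hd; [exact hy | lra].
  - apply continuous_ext_loc with f; [|exact (hc t ht)].
    exists (mkposreal t ht). intros y hy.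
    apply Rabs_lt_between' in hy. simpl in hy. rewrite Rmax_right by lra. reflexivity.
Qed.

Lemma extend_left_derive (f : R -> R) (t l : R) :
  0 < t -> is_derive f t l -> is_derive (extend_left f) t l.
Proof.
  intros ht hd. apply (is_derive_ext_loc f); [|exact hd].
  exists (mkposreal t ht). intros u hu.
  apply Rabs_lt_between' in hu. simpl in hu. symmetry. apply extend_left_eq. lra.
Qed.

Lemma linear_ode_integrating_factor (y a b : R -> R) (t : R) :
  (forall u, 0 <= u -> continuous y u) -> (forall u, continuous a u) ->
  (forall u, 0 < u -> is_derive y u (a u * y u + b u)) ->
  (forall u, 0 <= u -> 0 <= b u) -> 0 <= t ->
  y 0 <= y t * exp (- RInt a 0 t).
Proof.
  intros hy ha hd hb ht.
  set (A := fun v => RInt a 0 v).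
  assert (hA : forall u, is_derive A u (a u)).
  { intros u. apply (is_derive_RInt a A 0 u); [|apply ha].
    exists (mkposreal 1 Rlt_0_1). intros v _.
    apply (RInt_correct a 0 v), ex_RInt_continuous. intros; apply ha. }
  assert (hAc : forall u, continuous A u) by (intros u; exact (is_derive_continuous _ _ _ (hA u))).
  assert (hA0 : A 0 = 0) by (unfold A; rewrite RInt_point; reflexivity).
  replace (y 0) with (y 0 * exp (- A 0)) by (rewrite hA0, Ropp_0, exp_0; ring).
  apply (le_of_derive_nonneg (fun u => y u * exp (- A u)) (fun u => b u * exp (- A u))).
  - exact ht.
  - intros u hu. specialize (hd u (proj1 hu)). specialize (hA u). derive. ring.
  - intros u hu. specialize (hy u (proj1 hu)). continuity.
  - intros u hu. apply Rmult_le_pos; [apply hb, hu | apply Rlt_le, exp_pos].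
Qed.

Lemma linear_ode_nonneg (y a b : R -> R) (t : R) :
  (forall u, 0 <= u -> continuous y u) -> (forall u, continuous a u) ->
  (forall u, 0 < u -> is_derive y u (a u * y u + b u)) ->
  (forall u, 0 <= u -> 0 <= b u) -> 0 <= t -> 0 <= y 0 -> 0 <= y t.
Proof.
  intros hy ha hd hb ht h0.
  pose proof (linear_ode_integrating_factor y a b t hy ha hd hb ht).
  pose proof (exp_pos (- RInt a 0 t)). nra.
Qed.

Lemma linear_ode_pos (y a : R -> R) (t : R) :
  (forall u, 0 <= u -> continuous y u) -> (forall u, continuous a u) ->
  (forall u, 0 < u -> is_derive y u (a u * y u)) -> 0 <= t -> 0 < y 0 -> 0 < y t.
Proof.
  intros hy ha hd ht h0.
  pose proof (linear_ode_integrating_factor y a (fun _ => 0) t hy ha) as h.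
  pose proof (exp_pos (- RInt a 0 t)).
  enough (y 0 <= y t * exp (- RInt a 0 t)) by nra.
  apply h; [|intros; lra | exact ht].
  intros u hu. rewrite Rplus_0_r. exact (hd u hu).
Qed.

Lemma is_lim_mult' (f g : R -> R) (x : Rbar) (lf lg : R) :
  is_lim f x lf -> is_lim g x lg -> is_lim (fun y => f y * g y) x (lf * lg).
Proof. intros hf hg. exact (is_lim_mult f g x lf lg hf hg I). Qed.

Lemma forced_logistic_extinction (S : R -> R) (lam k beta c : R) :
  lam <= 0 -> lam < k -> 0 < beta ->
  (forall t, 0 <= t -> 0 < S t <= 1) ->
  (forall t, 0 < t -> is_derive S t (S t * (lam - k * S t + c * exp (- (beta * t)) * S t))) ->
  is_lim S p_infty 0.
Proof.
  intros hlam hk hbeta hS hd.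
  set (a := k - lam).
  assert (hforce : exists T, 0 < T /\ forall t, T <= t -> c * exp (- (beta * t)) < a / 2).
  { assert (hlim : is_lim (fun t => c * exp (- (beta * t))) p_infty (c * 0))
      by exact (is_lim_mult' _ _ _ c 0 (is_lim_const c p_infty) (is_lim_exp_opp_scal beta hbeta)).
    apply is_lim_spec in hlim.
    destruct (hlim (mkposreal (a / 2) ltac:(unfold a; lra))) as [M hM]. simpl in hM.
    exists (Rmax 0 M + 1). split; [pose proof (Rmax_l 0 M); lra|].
    intros t ht. pose proof (Rmax_r 0 M).
    specialize (hM t ltac:(lra)). rewrite Rmult_0_r, Rminus_0_r in hM.
    pose proof (Rle_abs (c * exp (- (beta * t)))). lra. }
  destruct hforce as (T & hT & hcT).
  (* Past T, [1 / S] grows at least linearly: since [S <= 1] and [lam <= 0], its derivative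
     [- lam / S + k - c e^{-beta t}] is at least [a / 2]. *)
  assert (hgrow : forall t, T <= t -> / S T + a / 2 * (t - T) <= / S t).
  { intros t ht.
    enough (/ S T - a / 2 * T <= / S t - a / 2 * t) by lra.
    apply (le_of_derive_nonneg (fun u => / S u - a / 2 * u)
             (fun u => - lam / S u + k - c * exp (- (beta * u)) - a / 2)); [exact ht | | |].
    - intros u hu. specialize (hd u ltac:(lra)). specialize (hS u ltac:(lra)).
      derive; [lra|]. field. lra.
    - intros u hu. specialize (hS u ltac:(lra)).
      assert (continuous S u) by (apply (is_derive_continuous _ _ _ (hd u ltac:(lra)))).
      continuity. lra.
    - intros u hu. specialize (hS u ltac:(lra)). specialize (hcT u (proj1 hu)).
      assert (- lam <= - lam / S u).
      { unfold Rdiv. rewrite <- (Rmult_1_r (- lam)) at 1.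
        apply Rmult_le_compat_l; [lra|]. rewrite <- Rinv_1. apply Rinv_le_contravar; lra. }
      unfold a in *. lra. }
  apply is_lim_spec. intros eps.
  exists (T + 2 / (a * eps)). intros t ht.
  assert (h2 : 0 < 2 / (a * eps)).
  { apply Rdiv_lt_0_compat; [lra|]. apply Rmult_lt_0_compat; [unfold a; lra | apply cond_pos]. }
  destruct (hS T ltac:(lra)) as [hST _]. destruct (hS t ltac:(lra)) as [hSt _].
  specialize (hgrow t ltac:(lra)).
  assert (hlin : / eps < a / 2 * (t - T)).
  { replace (/ eps) with (a / 2 * (2 / (a * eps)))
      by (field; split; [apply Rgt_not_eq, cond_pos | unfold a; lra]).
    apply Rmult_lt_compat_l; [unfold a; lra | lra]. }
  pose proof (Rinv_0_lt_compat _ hST).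
  rewrite Rminus_0_r, Rabs_pos_eq by lra.
  apply Rinv_lt_cancel; [apply cond_pos | lra].
Qed.

Lemma forced_logistic_convergence (S : R -> R) (lam k beta c : R) :
  0 < lam -> 0 < beta -> lam <> beta -> k <> 0 ->
  (forall t, 0 <= t -> continuous S t) -> (forall t, 0 <= t -> 0 < S t) ->
  (forall t, 0 < t -> is_derive S t (S t * (lam - k * S t + c * exp (- (beta * t)) * S t))) ->
  is_lim S p_infty (lam / k).
Proof.
  intros hlam hbeta hlb hk hc hS hd.
  (* [1 / S] solves the linear equation [z' = - lam z + k - c e^{-beta t}], whose solutions
     are explicit. *)
  set (A := - c / (lam - beta)).
  set (C := / S 0 - k / lam - A).
  assert (hz : forall t, 0 <= t ->
            / S t = k / lam + A * exp (- (beta * t)) + C * exp (- (lam * t))).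
  { intros t ht.
    assert (hconst : (/ S 0 - k / lam - A * exp (- (beta * 0))) * exp (lam * 0)
                   = (/ S t - k / lam - A * exp (- (beta * t))) * exp (lam * t)).
    { apply (eq_of_derive_zero
               (fun u => (/ S u - k / lam - A * exp (- (beta * u))) * exp (lam * u)));
        [exact ht | |].
      - intros u hu. specialize (hd u (proj1 hu)). specialize (hS u ltac:(lra)).
        derive; [lra|]. unfold A. field. lra.
      - intros u hu. specialize (hS u (proj1 hu)). specialize (hc u (proj1 hu)).
        continuity. lra. }
    rewrite !Rmult_0_r, Ropp_0, exp_0, !Rmult_1_r in hconst.
    replace C with ((/ S t - k / lam - A * exp (- (beta * t))) * exp (lam * t))
      by (unfold C; lra).
    rewrite (exp_Ropp (lam * t)). field.
    split; [apply Rgt_not_eq, exp_pos | specialize (hS t ht); lra]. }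
  assert (hzlim : is_lim (fun t => k / lam + A * exp (- (beta * t)) + C * exp (- (lam * t)))
                    p_infty (k / lam + A * 0 + C * 0)).
  { apply is_lim_plus'; [apply is_lim_plus'; [apply is_lim_const|] |];
      apply is_lim_mult'; auto using is_lim_const, is_lim_exp_opp_scal. }
  replace (k / lam + A * 0 + C * 0) with (k / lam) in hzlim by ring.
  assert (hne : Finite (k / lam) <> 0).
  { intros h. injection h as h. apply hk.
    replace k with (k / lam * lam) by (field; lra). rewrite h. ring. }
  replace (lam / k) with (/ (k / lam)) by (field; lra).
  apply (is_lim_ext_loc (fun t => / (k / lam + A * exp (- (beta * t)) + C * exp (- (lam * t))))).
  - exists 0. intros t ht. rewrite <- hz, Rinv_inv by lra. reflexivity.
  - exact (is_lim_inv _ _ _ hzlim hne).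
Qed.

Lemma continuous_at_right (f : R -> R) (x : R) :
  continuous f x -> filterlim f (at_right x) (locally (f x)).
Proof.
  intros hc. eapply filterlim_filter_le_1; [|exact hc].
  intros P hP. unfold at_right, within. apply filter_imp with P; auto.
Qed.

Section ASIS.

Variables beta betaa alpha xa : R.
Hypotheses (hbeta : 0 < beta) (hbetaa : 0 <= betaa) (halpha : 0 < alpha) (hxa : 0 <= xa <= 1).

Local Notation fa := (Fa beta betaa alpha xa).
Local Notation fr := (Fr beta betaa alpha xa).
Local Notation k := (beta - betaa * xa).
Local Notation lam := (beta - betaa * xa - alpha).

Lemma Fa_add_Fr (ia ir : R) :
  fa ia ir + fr ia ir
  = (ia + ir) * (k * (1 - (ia + ir)) - alpha + betaa * (ia - xa * (ia + ir))).
Proof. unfold Fa, Fr. ring. Qed.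

Lemma Fa_Fr_imbalance (ia ir : R) :
  (1 - xa) * fa ia ir - xa * fr ia ir
  = - (beta * (ia + ir) + betaa * (xa - ia) + alpha) * (ia - xa * (ia + ir)).
Proof. unfold Fa, Fr. ring. Qed.

Lemma Fa_diag (s : R) : fa (xa * s) ((1 - xa) * s) = xa * s * (lam - k * s).
Proof. unfold Fa. ring. Qed.

Lemma Fr_diag (s : R) : fr (xa * s) ((1 - xa) * s) = (1 - xa) * s * (lam - k * s).
Proof. unfold Fr. ring. Qed.

Lemma threshold_iff : beta / alpha <= 1 + betaa * xa / alpha <-> lam <= 0.
Proof.
  replace (1 + betaa * xa / alpha) with ((alpha + betaa * xa) / alpha) by (field; lra).
  unfold Rdiv. split; intros h.
  - apply Rmult_le_reg_r in h; [lra | now apply Rinv_0_lt_compat].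
  - apply Rmult_le_compat_r; [apply Rlt_le, Rinv_0_lt_compat |]; lra.
Qed.

Lemma endemic_equilibrium :
  0 < lam -> is_equilibrium beta betaa alpha xa
               (xa * (lam / (lam + alpha))) ((1 - xa) * (lam / (lam + alpha))).
Proof.
  intros hlam. pose proof (div_add_in_01 lam alpha hlam halpha).
  split; [split; split; nra|].
  rewrite Fa_diag, Fr_diag.
  replace (lam - k * (lam / (lam + alpha))) with 0 by (field; lra).
  split; ring.
Qed.

Lemma equilibrium_eq_endemic (ia ir : R) :
  is_equilibrium beta betaa alpha xa ia ir -> 0 < ia + ir ->
  ia = xa * (lam / (lam + alpha)) /\ ir = (1 - xa) * (lam / (lam + alpha)).
Proof.
  intros [[[hia0 hia1] [hir0 hir1]] [hfa hfr]] hS.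
  pose proof (Fa_Fr_imbalance ia ir) as himb. pose proof (Fa_add_Fr ia ir) as hsum.
  rewrite hfa, hfr in himb, hsum.
  assert (hdiag : ia - xa * (ia + ir) = 0).
  { assert (0 < beta * (ia + ir) + betaa * (xa - ia) + alpha) by nra.
    destruct (Rmult_integral (- (beta * (ia + ir) + betaa * (xa - ia) + alpha))
                (ia - xa * (ia + ir))) as [h | h]; lra. }
  rewrite hdiag, Rmult_0_r, Rplus_0_r in hsum.
  assert (hrate : k * (1 - (ia + ir)) - alpha = 0).
  { destruct (Rmult_integral (ia + ir) (k * (1 - (ia + ir)) - alpha)) as [h | h]; lra. }
  assert (hk : lam + alpha <> 0) by (intros h; replace (lam + alpha) with k in h by ring; nra).
  assert (ia + ir = lam / (lam + alpha)).
  { apply Rmult_eq_reg_r with (lam + alpha); [|exact hk].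
    unfold Rdiv. rewrite Rmult_assoc, Rinv_l by exact hk. lra. }
  split; nra.
Qed.

Section Solution.

Variables ia ir : R -> R.
Hypotheses (hsol : is_solution beta betaa alpha xa ia ir)
  (hinit : inGamma xa (ia 0) (ir 0))
  (hneq : ~ is_equilibrium beta betaa alpha xa (ia 0) (ir 0)).

Local Notation ja := (extend_left ia).
Local Notation jr := (extend_left ir).
Local Notation itot t := (ja t + jr t).
Definition diag_dev (t : R) : R := (ja t - xa * itot t) / itot t.

Lemma ja_jr_continuous (t : R) : continuous ja t /\ continuous jr t.
Proof.
  destruct hsol as (hd & ha0 & hr0).
  split; apply extend_left_continuous; try assumption;
    intros u hu; destruct (hd u hu); eapply is_derive_continuous; eassumption.
Qed.

Lemma ja_jr_derive (t : R) : 0 < t ->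
  is_derive ja t (fa (ja t) (jr t)) /\ is_derive jr t (fr (ja t) (jr t)).
Proof.
  intros ht. rewrite !extend_left_eq by lra.
  destruct (proj1 hsol t ht). split; apply extend_left_derive; assumption.
Qed.

Lemma itot_derive (t : R) : 0 < t ->
  is_derive (fun u => itot u) t
    (itot t * (k * (1 - itot t) - alpha + betaa * (ja t - xa * itot t))).
Proof. intros ht. destruct (ja_jr_derive t ht). derive. unfold Fa, Fr. ring. Qed.

Lemma itot_pos (t : R) : 0 <= t -> 0 < itot t.
Proof.
  intros ht.
  apply (linear_ode_pos (fun u => itot u)
           (fun u => k * (1 - itot u) - alpha + betaa * (ja u - xa * itot u))); [| | | exact ht |].
  - intros u _. destruct (ja_jr_continuous u). continuity.
  - intros u. destruct (ja_jr_continuous u). continuity.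
  - intros u hu. rewrite Rmult_comm. exact (itot_derive u hu).
  - rewrite !extend_left_eq by lra.
    destruct hinit as [[ha0 _] [hr0 _]].
    destruct (Rle_lt_or_eq_dec 0 (ia 0 + ir 0)) as [h | h]; [lra | exact h |].
    exfalso. apply hneq. replace (ia 0) with 0 by lra. replace (ir 0) with 0 by lra.
    split; [split; split; lra |]. unfold Fa, Fr. split; ring.
Qed.

Lemma diag_dev_derive (t : R) : 0 < t -> is_derive diag_dev t (- beta * diag_dev t).
Proof.
  intros ht. destruct (ja_jr_derive t ht). pose proof (itot_pos t (Rlt_le _ _ ht)).
  unfold diag_dev. derive; [lra|]. unfold Fa, Fr. field. lra.
Qed.

Lemma diag_dev_exp (t : R) : 0 <= t -> diag_dev t = diag_dev 0 * exp (- (beta * t)).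
Proof.
  intros ht.
  assert (h : diag_dev 0 * exp (beta * 0) = diag_dev t * exp (beta * t)).
  { apply (eq_of_derive_zero (fun u => diag_dev u * exp (beta * u))); [exact ht | |].
    - intros u hu. pose proof (diag_dev_derive u (proj1 hu)). derive. ring.
    - intros u hu. pose proof (itot_pos u (proj1 hu)). destruct (ja_jr_continuous u).
      unfold diag_dev. continuity. lra. }
  rewrite Rmult_0_r, exp_0, Rmult_1_r in h.
  rewrite h, Rmult_assoc, <- exp_plus. replace (beta * t + - (beta * t)) with 0 by ring.
  rewrite exp_0. ring.
Qed.

Lemma ja_jr_repr (t : R) : 0 <= t ->
  ja t = itot t * (xa + diag_dev 0 * exp (- (beta * t))) /\
  jr t = itot t * (1 - xa - diag_dev 0 * exp (- (beta * t))).
Proof.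
  intros ht. rewrite <- diag_dev_exp by exact ht. pose proof (itot_pos t ht).
  unfold diag_dev. set (a := ja t) in *. set (b := jr t) in *. split; field; lra.
Qed.

Lemma ja_jr_nonneg (t : R) : 0 <= t -> 0 <= ja t /\ 0 <= jr t.
Proof.
  intros ht.
  assert (hinit' : 0 <= ja 0 /\ 0 <= jr 0)
    by (rewrite !extend_left_eq by lra; destruct hinit as [[? _] [? _]]; lra).
  destruct (ja_jr_repr 0 (Rle_refl 0)) as [ha0 hr0].
  destruct (ja_jr_repr t ht) as [hat hrt].
  pose proof (itot_pos 0 (Rle_refl 0)) as hs0. pose proof (itot_pos t ht) as hst.
  rewrite Rmult_0_r, Ropp_0, exp_0, Rmult_1_r in ha0, hr0.
  assert (he : 0 < exp (- (beta * t)) <= 1)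
    by (split; [apply exp_pos | apply exp_opp_le_1; nra]).
  set (d := diag_dev 0) in *. set (e := exp (- (beta * t))) in *.
  set (s0 := ja 0 + jr 0) in *. set (st := ja t + jr t) in *.
  (* [xa + d e] is a convex combination of [xa] and [xa + d], both nonnegative. *)
  assert (0 <= xa + d) by nra. assert (0 <= 1 - xa - d) by nra.
  rewrite hat, hrt. split; apply Rmult_le_pos; nra.
Qed.

Lemma ja_le_xa (t : R) : 0 <= t -> ja t <= xa.
Proof.
  intros ht.
  enough (0 <= xa - ja t) by lra.
  apply (linear_ode_nonneg (fun u => xa - ja u) (fun u => - beta * itot u + betaa * ja u - alpha)
           (fun _ => alpha * xa)); [| | | intros; nra | exact ht |].
  - intros u _. destruct (ja_jr_continuous u). continuity.
  - intros u. destruct (ja_jr_continuous u). continuity.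
  - intros u hu. destruct (ja_jr_derive u hu). derive. unfold Fa. ring.
  - rewrite extend_left_eq by lra. destruct hinit as [[_ ?] _]. lra.
Qed.

Lemma jr_le_1_xa (t : R) : 0 <= t -> jr t <= 1 - xa.
Proof.
  intros ht.
  enough (0 <= 1 - xa - jr t) by lra.
  apply (linear_ode_nonneg (fun u => 1 - xa - jr u) (fun u => - beta * itot u - alpha)
           (fun u => betaa * (xa - ja u) * jr u + alpha * (1 - xa))); [| | | | exact ht |].
  - intros u _. destruct (ja_jr_continuous u). continuity.
  - intros u. destruct (ja_jr_continuous u). continuity.
  - intros u hu. destruct (ja_jr_derive u hu). derive. unfold Fr. ring.
  - intros u hu. pose proof (ja_le_xa u hu). destruct (ja_jr_nonneg u hu).
    set (a := ja u) in *. set (b := jr u) in *.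
    assert (0 <= betaa * (xa - a) * b) by (apply Rmult_le_pos; [apply Rmult_le_pos|]; lra).
    nra.
  - rewrite extend_left_eq by lra. destruct hinit as [_ [_ ?]]. lra.
Qed.

Lemma itot_derive_forced (t : R) : 0 < t ->
  is_derive (fun u => itot u) t
    (itot t * (lam - k * itot t + betaa * diag_dev 0 * exp (- (beta * t)) * itot t)).
Proof.
  intros ht.
  replace (itot t * (lam - k * itot t + betaa * diag_dev 0 * exp (- (beta * t)) * itot t))
    with (itot t * (k * (1 - itot t) - alpha + betaa * (ja t - xa * itot t))).
  - exact (itot_derive t ht).
  - rewrite !Rmult_assoc, <- (Rmult_assoc (diag_dev 0)), <- diag_dev_exp by lra.
    pose proof (itot_pos t (Rlt_le _ _ ht)).
    unfold diag_dev. set (a := ja t) in *. set (b := jr t) in *. field. lra.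
Qed.

Lemma solution_lim_of_itot_lim (s : R) :
  is_lim (fun t => itot t) p_infty s ->
  is_lim ia p_infty (xa * s) /\ is_lim ir p_infty ((1 - xa) * s).
Proof.
  intros hs.
  assert (he : is_lim (fun t => diag_dev 0 * exp (- (beta * t))) p_infty (diag_dev 0 * 0))
    by exact (is_lim_mult' _ _ _ _ _ (is_lim_const _ _) (is_lim_exp_opp_scal beta hbeta)).
  split.
  - apply (is_lim_ext_loc (fun t => itot t * (xa + diag_dev 0 * exp (- (beta * t))))).
    + exists 0. intros t ht. rewrite <- (extend_left_eq ia t) by lra.
      symmetry. apply (ja_jr_repr t). lra.
    + replace (xa * s) with (s * (xa + diag_dev 0 * 0)) by ring.
      apply is_lim_mult'; [exact hs|]. apply is_lim_plus'; [apply is_lim_const | exact he].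
  - apply (is_lim_ext_loc (fun t => itot t * (1 - xa - diag_dev 0 * exp (- (beta * t))))).
    + exists 0. intros t ht. rewrite <- (extend_left_eq ir t) by lra.
      symmetry. apply (ja_jr_repr t). lra.
    + replace ((1 - xa) * s) with (s * (1 - xa - diag_dev 0 * 0)) by ring.
      apply is_lim_mult'; [exact hs|]. apply is_lim_minus'; [apply is_lim_const | exact he].
Qed.

Lemma solution_tends_to_zero :
  lam <= 0 -> is_lim ia p_infty 0 /\ is_lim ir p_infty 0.
Proof.
  intros hlam.
  assert (hext : is_lim (fun t => itot t) p_infty 0).
  { apply (forced_logistic_extinction _ lam k beta (betaa * diag_dev 0));
      [exact hlam | lra | exact hbeta | | exact itot_derive_forced].
    intros t ht. split; [exact (itot_pos t ht)|].
    pose proof (ja_le_xa t ht). pose proof (jr_le_1_xa t ht). lra. }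
  destruct (solution_lim_of_itot_lim 0 hext) as [ha hr].
  rewrite Rmult_0_r in ha, hr. split; assumption.
Qed.

Lemma solution_tends_to_endemic : 0 < lam ->
  is_lim ia p_infty (xa * (lam / (lam + alpha))) /\
  is_lim ir p_infty ((1 - xa) * (lam / (lam + alpha))).
Proof.
  intros hlam.
  apply solution_lim_of_itot_lim.
  replace (lam + alpha) with k by ring.
  apply (forced_logistic_convergence _ lam k beta (betaa * diag_dev 0));
    [exact hlam | exact hbeta | nra | lra | | exact itot_pos | exact itot_derive_forced].
  intros t _. destruct (ja_jr_continuous t). continuity.
Qed.

End Solution.

(* The logistic curve along the diagonal [ia : ir = xa : 1 - xa] is an explicit solution
   that leaves a small non-equilibrium state and tends to the endemic level. *)
Lemma zero_not_GAS : 0 < lam -> ~ GAS beta betaa alpha xa 0 0.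
Proof.
  intros hlam [_ hGAS].
  assert (hk : 0 < k) by lra.
  set (s := fun t => lam / (k * (1 + exp (- (lam * t))))).
  assert (hs_derive : forall t, is_derive s t (s t * (lam - k * s t))).
  { intros t. pose proof (exp_pos (- (lam * t))). unfold s.
    derive; [apply Rgt_not_eq; nra |]. field. nra. }
  assert (hs_cont : forall t, continuous s t)
    by (intros t; exact (is_derive_continuous _ _ _ (hs_derive t))).
  assert (hs_lim : is_lim s p_infty (lam / k)).
  { apply (is_lim_ext (fun t => lam * / (k * (1 + exp (- (lam * t)))))); [reflexivity|].
    replace (lam / k) with (lam * / (k * (1 + 0))) by (field; lra).
    apply is_lim_mult'; [apply is_lim_const|].
    apply (is_lim_inv _ _ (k * (1 + 0))).
    - apply is_lim_mult'; [apply is_lim_const|].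
      apply is_lim_plus'; [apply is_lim_const | exact (is_lim_exp_opp_scal lam hlam)].
    - intros h. injection h. lra. }
  assert (hs0 : s 0 = lam / (2 * k))
    by (unfold s; rewrite Rmult_0_r, Ropp_0, exp_0; f_equal; ring).
  assert (hs0_bounds : 0 < s 0 < 1).
  { rewrite hs0. split; [apply Rdiv_lt_0_compat; lra|].
    apply Rmult_lt_reg_r with (2 * k); [lra|]. field_simplify; lra. }
  destruct (hGAS (fun t => xa * s t) (fun t => (1 - xa) * s t)) as [hlim_a hlim_r].
  - split; [|split].
    + intros t _. specialize (hs_derive t).
      rewrite Fa_diag, Fr_diag. split; derive; ring.
    + apply (continuous_at_right (fun t => xa * s t)). continuity.
    + apply (continuous_at_right (fun t => (1 - xa) * s t)). continuity.
  - split; split; nra.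
  - intros [_ [hfa hfr]]. rewrite Fa_diag in hfa. rewrite Fr_diag in hfr.
    assert (lam - k * s 0 = lam / 2) by (rewrite hs0; field; lra).
    assert (s 0 * (lam - k * s 0) = 0) by lra.
    nra.
  - assert (hlim_a' := is_lim_mult' _ _ _ _ _ (is_lim_const xa p_infty) hs_lim).
    assert (hlim_r' := is_lim_mult' _ _ _ _ _ (is_lim_const (1 - xa) p_infty) hs_lim).
    apply is_lim_unique in hlim_a, hlim_r, hlim_a', hlim_r'.
    rewrite hlim_a in hlim_a'. rewrite hlim_r in hlim_r'.
    injection hlim_a'. injection hlim_r'.
    assert (0 < lam / k) by (apply Rdiv_lt_0_compat; lra). nra.
Qed.

End ASIS.

Theorem theorem2 (beta betaa alpha xa : R) :
  0 < beta -> 0 < betaa -> 0 < alpha -> 0 <= xa <= 1 ->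
  (GAS beta betaa alpha xa 0 0 <-> beta / alpha <= 1 + betaa * xa / alpha) /\
  (beta / alpha > 1 + betaa * xa / alpha ->
   let lam := beta - betaa * xa - alpha in
   let ea := xa * (lam / (lam + alpha)) in
   let er := (1 - xa) * (lam / (lam + alpha)) in
   ((0 < xa < 1 ->
     interior_pt xa ea er /\
     forall pa pr, interior_pt xa pa pr ->
       is_equilibrium beta betaa alpha xa pa pr -> pa = ea /\ pr = er) /\
    GAS beta betaa alpha xa ea er)).
Proof.
  intros hbeta hbetaa halpha hxa.
  pose proof (Rlt_le _ _ hbetaa) as hbetaa'.
  pose proof (threshold_iff beta betaa alpha xa halpha) as hthr.
  split.
  - rewrite hthr. split.
    + intros hGAS. apply Rnot_lt_le. intros hlam.
      exact (zero_not_GAS _ _ _ _ halpha hxa hlam hGAS).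
    + intros hlam. split.
      * split; [unfold inGamma; lra | unfold Fa, Fr; split; ring].
      * intros ia ir hsol hinit hneq.
        exact (solution_tends_to_zero _ _ _ _ hbeta hbetaa' halpha hxa _ _ hsol hinit hneq hlam).
  - intros hgt lam ea er.
    assert (hlam : 0 < lam) by (apply Rnot_le_lt; intros h; apply hthr in h; lra).
    split; [intros hx; split | split].
    + pose proof (div_add_in_01 lam alpha hlam halpha).
      unfold interior_pt, ea, er. split; split; nra.
    + intros pa pr [[hpa _] [hpr _]] hpeq.
      apply (equilibrium_eq_endemic _ _ _ _ hbeta hbetaa' halpha _ _ hpeq). lra.
    + exact (endemic_equilibrium _ _ _ _ halpha hxa hlam).
    + intros ia ir hsol hinit hneq.
      exact (solution_tends_to_endemic _ _ _ _ hbeta hbetaa' halpha hxa _ _ hsol hinit hneq hlam).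
Qed.
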